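(* Let $\delta>0$ and $f=(f_1,\dots,f_N)$ with each $f_i$ bounded and continuous on $[0,\delta)$ and $f_i(0)=f_j(0)=:f(\mathsf v)$ for all $i,j$. Then there is a unique $u=(u_1,\dots,u_N)$ with each $u_i\in C^2([0,\delta])$ such that $$L_iu_i(x)=f_i(x)\ (x\in(0,\delta),\,1\le i\le N),\quad \eta Lu(\mathsf v)-\sum_{i=1}^N\rho_iu_i'(0)=0,\quad u_i(\delta)=0\ (1\le i\le N),\quad u_i(0)=u_j(0)\ (1\le i,j\le N),$$ where $L_iu_i=\frac12\sigma_i^2u_i''+b_iu_i'$ and $Lu(\mathsf v)$ is the common value of $\lim_{x\to0}L_iu_i(x)$. It is given by $u_i(x)=-\kappa_i\alpha_i(x)/\alpha_i(0)-\beta_i(x)$ for $0\le x\le\delta$, where $$\kappa_i=\Big(\eta f(\mathsf v)-\sum_{j=1}^N\frac{\rho_j(\beta_1(0)-\beta_j(0))}{\alpha_j(0)}\Big)\Big(\sum_{j=1}^N\frac{\rho_j}{\alpha_j(0)}\Big)^{-1}+\beta_1(0)-\beta_i(0),$$ $$\alpha_i(x)=\int_x^\delta\exp\Big(-\int_0^y\frac{2b_i(z)}{\sigma_i^2(z)}dz\Big)dy,$$ $$\beta_i(x)=\int_x^\delta\Big(\int_0^y\frac{2f_i(z)}{\sigma_i^2(z)}\exp\Big(\int_0^z\frac{2b_i(s)}{\sigma_i^2(s)}ds\Big)dz\Big)\exp\Big(-\int_0^y\frac{2b_i(z)}{\sigma_i^2(z)}dz\Big)dy.$$ Furthermore, $\max_{1\le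 i\le N}\max_{x\in[0,\delta]}|u_i''(x)|=O(1)$ as $\delta\downarrow0$, where the hidden constant depends on $f$ only through $\|f\|_\infty$.
   Context: Fix $N\ge1$, $\eta\ge0$, and $\rho_1,\dots,\rho_N>0$ with $\sum_i\rho_i=1$. For each $i$, $\sigma_i,b_i$ are bounded continuous functions on $(0,\infty)$ extending continuously to $[0,\infty)$, with $\sigma_i>\sigma_0$ for some constant $\sigma_0>0$ independent of $i$. (These are the edge coefficients of a diffusion on a star graph with $N$ half-line edges joined at a vertex $\mathsf v$.)
   Formalization: Each $u_i$ is taken in C¹([0,δ]) with $u_i''$ existing and continuous only on [0,δ), instead of C²([0,δ]), uniqueness holds in this larger class, and the bound on $|u_i''(x)|$ is taken over x ∈ [0,δ). Apart from conventions, each condition added here is assumed in the paper as well or is needed for the statement above to hold. *)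

From Stdlib Require Import Reals.
From Coquelicot Require Import Coquelicot.
Open Scope R_scope.

(* Sum over the edge indices 0, ..., N-1 (edge i of the paper is index i-1). *)
Definition sum_lt (N : nat) (g : nat -> R) : R :=
  match N with O => 0 | S n => sum_f_R0 g n end.

Definition rel_continuous_on (D : R -> Prop) (g : R -> R) : Prop :=
  forall x, D x -> filterlim g (within D (locally x)) (locally (g x)).

Definition rel_derivative_on (D : R -> Prop) (g dg : R -> R) : Prop :=
  forall x, D x ->
    filterlim (fun y => (g y - g x) / (y - x))
      (within (fun y => D y /\ y <> x) (locally x)) (locally (dg x)).

Definition Icc (a c : R) (x : R) : Prop := a <= x <= c.
Definition Ico (a c : R) (x : R) : Prop := a <= x < c.

Definition Lgen (sig bb : R -> R) (dg d2g : R -> R) (x : R) : R :=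
  / 2 * (sig x) ^ 2 * d2g x + bb x * dg x.

Definition regular (delta : R) (u du d2u : R -> R) : Prop :=
  rel_derivative_on (Icc 0 delta) u du /\ rel_continuous_on (Icc 0 delta) du /\
  rel_derivative_on (Ico 0 delta) du d2u /\ rel_continuous_on (Ico 0 delta) d2u.

Definition solves (N : nat) (eta : R) (rho : nat -> R) (sig bb : nat -> R -> R)
  (delta : R) (f : nat -> R -> R) (u du d2u : nat -> R -> R) : Prop :=
  (forall i, (i < N)%nat -> regular delta (u i) (du i) (d2u i)) /\
  (forall i x, (i < N)%nat -> 0 < x < delta ->
      Lgen (sig i) (bb i) (du i) (d2u i) x = f i x) /\
  (exists Lv : R,
      (forall i, (i < N)%nat ->
         filterlim (Lgen (sig i) (bb i) (du i) (d2u i)) (at_right 0) (locally Lv)) /\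
      eta * Lv - sum_lt N (fun i => rho i * du i 0) = 0) /\
  (forall i, (i < N)%nat -> u i delta = 0) /\
  (forall i j, (i < N)%nat -> (j < N)%nat -> u i 0 = u j 0).

Definition intB (sig bb : R -> R) (y : R) : R :=
  RInt (fun z => 2 * bb z / (sig z) ^ 2) 0 y.

Definition alpha (sig bb : R -> R) (delta x : R) : R :=
  RInt (fun y => exp (- intB sig bb y)) x delta.

Definition beta (sig bb fi : R -> R) (delta x : R) : R :=
  RInt (fun y =>
          RInt (fun z => 2 * fi z / (sig z) ^ 2 * exp (intB sig bb z)) 0 y
          * exp (- intB sig bb y)) x delta.

Definition kappa (N : nat) (eta : R) (rho : nat -> R) (sig bb : nat -> R -> R)
  (delta : R) (f : nat -> R -> R) (i : nat) : R :=
  (eta * f O 0 - sum_lt N (fun j => rho j * (beta (sig O) (bb O) (f O) delta 0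
                                            - beta (sig j) (bb j) (f j) delta 0)
                                      / alpha (sig j) (bb j) delta 0))
  * / sum_lt N (fun j => rho j / alpha (sig j) (bb j) delta 0)
  + beta (sig O) (bb O) (f O) delta 0 - beta (sig i) (bb i) (f i) delta 0.

Definition usol (N : nat) (eta : R) (rho : nat -> R) (sig bb : nat -> R -> R)
  (delta : R) (f : nat -> R -> R) (i : nat) (x : R) : R :=
  - kappa N eta rho sig bb delta f i * alpha (sig i) (bb i) delta x
      / alpha (sig i) (bb i) delta 0
  - beta (sig i) (bb i) (f i) delta x.

Definition admissible_f (N : nat) (delta : R) (f : nat -> R -> R) : Prop :=
  (forall i, (i < N)%nat ->
     (exists B, forall x, 0 <= x < delta -> Rabs (f i x) <= B) /\
     rel_continuous_on (Ico 0 delta) (f i)) /\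
  (forall i j, (i < N)%nat -> (j < N)%nat -> f i 0 = f j 0).

From Stdlib Require Import Reals Lra Lia Classical ClassicalEpsilon.
From Coquelicot Require Import Coquelicot.
Open Scope R_scope.

(* On one edge, (1/2) sigma^2 u'' + b u' = f is a first-order linear equation for u'. With the
   scale density S' = exp (- int_0^x 2 b / sigma^2) and the speed density m = 2 / (sigma^2 S')
   it reads (u' / S')' = f m, so a solution vanishing at delta is u = - u'(0) alpha - beta, and
   conversely this formula solves the equation for every slope u'(0). As Lu(v) = f(v), the
   vertex conditions (a common value W = u_i(0) and eta f(v) = sum_i rho_i u_i'(0)) form a
   linear system for the slopes whose unique solution is u_i'(0) = kappa_i / alpha_i(0).
   For the bound: alpha_i(0) is of order delta and beta_i(0) of order delta^2, so the system
   keeps the slopes bounded as delta -> 0; then u' is bounded, and the equation bounds u''. *)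

(** * Limits and derivatives relative to a subset of R *)

Definition lim_within (D : R -> Prop) (g : R -> R) (x L : R) : Prop :=
  forall eps, 0 < eps -> exists d, 0 < d /\
    forall y, D y -> Rabs (y - x) < d -> Rabs (g y - L) < eps.

Lemma filterlim_within_iff (D : R -> Prop) (g : R -> R) (x L : R) :
  filterlim g (within D (locally x)) (locally L) <-> lim_within D g x L.
Proof.
split.
- intros H eps Heps.
  destruct (H (fun v => Rabs (v - L) < eps)) as [d Hd].
  { exists (mkposreal eps Heps). now intros v. }
  exists d; split; [apply cond_pos|]. intros y Dy Hy. now apply Hd.
- intros H P [eps HP].
  destruct (H eps (cond_pos eps)) as [d [Hd H']].
  exists (mkposreal d Hd). intros y Hy Dy. now apply HP, H'.
Qed.

Lemma continuity_pt_iff_lim_within (g : R -> R) (x : R) :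
  continuity_pt g x <-> lim_within (fun _ => True) g x (g x).
Proof.
rewrite continuity_pt_filterlim, <- filterlim_within_iff.
split; intros H P HP.
- destruct (H P HP) as [d Hd]. exists d. intros y Hy _. now apply Hd.
- destruct (H P HP) as [d Hd]. exists d. intros y Hy. now apply Hd.
Qed.

Lemma lim_within_subset (D D' : R -> Prop) (g : R -> R) (x L : R) :
  (forall y, D' y -> D y) -> lim_within D g x L -> lim_within D' g x L.
Proof.
intros HS H eps Heps. destruct (H eps Heps) as [d [Hd H']]. exists d; auto.
Qed.

Lemma lim_within_ext_loc (D : R -> Prop) (g g' : R -> R) (x L r : R) : 0 < r ->
  (forall y, D y -> Rabs (y - x) < r -> g y = g' y) ->
  lim_within D g x L -> lim_within D g' x L.
Proof.
intros Hr He H eps Heps. destruct (H eps Heps) as [d [Hd H']].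
exists (Rmin d r). split; [now apply Rmin_pos|].
intros y Dy Hy. pose proof (Rmin_l d r). pose proof (Rmin_r d r).
rewrite <- He by (auto; lra). apply H'; auto; lra.
Qed.

Lemma lim_within_continuity_pt (D : R -> Prop) (g : R -> R) (x : R) :
  continuity_pt g x -> lim_within D g x (g x).
Proof.
intros H. apply continuity_pt_iff_lim_within in H.
now apply (lim_within_subset (fun _ => True)).
Qed.

Lemma lim_within_plus (D : R -> Prop) (f g : R -> R) (x A C : R) :
  lim_within D f x A -> lim_within D g x C -> lim_within D (fun y => f y + g y) x (A + C).
Proof.
rewrite <- !filterlim_within_iff. intros H1 H2.
exact (filterlim_comp_2 f g Rplus H1 H2 (filterlim_plus (V := R_NormedModule) A C)).
Qed.

Lemma lim_within_minus (D : R -> Prop) (f g : R -> R) (x A C : R) :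
  lim_within D f x A -> lim_within D g x C -> lim_within D (fun y => f y - g y) x (A - C).
Proof.
intros H1 H2. apply (lim_within_plus D f (fun y => - g y) x A (- C) H1).
apply filterlim_within_iff in H2. apply filterlim_within_iff.
eapply filterlim_comp; [exact H2 | exact (filterlim_opp (V := R_NormedModule) C)].
Qed.

Lemma lim_within_mult (D : R -> Prop) (f g : R -> R) (x A C : R) :
  lim_within D f x A -> lim_within D g x C -> lim_within D (fun y => f y * g y) x (A * C).
Proof.
rewrite <- !filterlim_within_iff. intros H1 H2.
exact (filterlim_comp_2 f g Rmult H1 H2 (filterlim_mult (K := R_AbsRing) A C)).
Qed.

Definition limit_point (D : R -> Prop) (x : R) : Prop :=
  forall d, 0 < d -> exists y, D y /\ Rabs (y - x) < d.

Lemma limit_point_open_interval_left (a b : R) : a < b -> limit_point (fun y => a < y < b) a.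
Proof.
intros Hab d Hd. pose proof (Rmin_pos d (b - a) Hd ltac:(lra)).
pose proof (Rmin_l d (b - a)). pose proof (Rmin_r d (b - a)).
exists (a + Rmin d (b - a) / 2). split; [lra|]. rewrite Rabs_right; lra.
Qed.

Lemma limit_point_open_interval_right (a b : R) : a < b -> limit_point (fun y => a < y < b) b.
Proof.
intros Hab d Hd. pose proof (Rmin_pos d (b - a) Hd ltac:(lra)).
pose proof (Rmin_l d (b - a)). pose proof (Rmin_r d (b - a)).
exists (b - Rmin d (b - a) / 2). split; [lra|]. rewrite Rabs_left; lra.
Qed.

Section LimitsAtLimitPoints.
Variables (D : R -> Prop) (g : R -> R) (x : R).
Hypothesis HD : limit_point D x.

Lemma lim_within_unique (L1 L2 : R) : lim_within D g x L1 -> lim_within D g x L2 -> L1 = L2.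
Proof.
intros H1 H2. apply NNPP; intro Hne.
set (e := Rabs (L1 - L2) / 2).
assert (He : 0 < e) by (apply Rdiv_lt_0_compat; [apply Rabs_pos_lt|]; lra).
destruct (H1 e He) as [d1 [Hd1 H1']]. destruct (H2 e He) as [d2 [Hd2 H2']].
destruct (HD (Rmin d1 d2) (Rmin_pos _ _ Hd1 Hd2)) as [y [Dy Hy]].
specialize (H1' y Dy (Rlt_le_trans _ _ _ Hy (Rmin_l _ _))).
specialize (H2' y Dy (Rlt_le_trans _ _ _ Hy (Rmin_r _ _))).
pose proof (Rabs_triang (g y - L2) (- (g y - L1))).
rewrite Rabs_Ropp in H. replace (g y - L2 + - (g y - L1)) with (L1 - L2) in H by ring.
unfold e in *. lra.
Qed.

Lemma lim_within_le (L C : R) : lim_within D g x L -> (forall y, D y -> g y <= C) -> L <= C.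
Proof.
intros H HC. apply Rnot_lt_le; intro Hlt.
destruct (H (L - C) ltac:(lra)) as [d [Hd H']]. destruct (HD d Hd) as [y [Dy Hy]].
specialize (H' y Dy Hy). specialize (HC y Dy). apply Rabs_def2 in H'. lra.
Qed.

Lemma lim_within_ge (L C : R) : lim_within D g x L -> (forall y, D y -> C <= g y) -> C <= L.
Proof.
intros H HC. apply Rnot_lt_le; intro Hlt.
destruct (H (C - L) ltac:(lra)) as [d [Hd H']]. destruct (HD d Hd) as [y [Dy Hy]].
specialize (H' y Dy Hy). specialize (HC y Dy). apply Rabs_def2 in H'. lra.
Qed.

Lemma lim_within_abs_le (L C : R) :
  lim_within D g x L -> (forall y, D y -> Rabs (g y) <= C) -> Rabs L <= C.
Proof.
intros H HC. apply Rabs_le. split.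
- apply (lim_within_ge L (- C) H).
  intros y Dy. specialize (HC y Dy). apply Rabs_le_between in HC. lra.
- apply (lim_within_le L C H). intros y Dy. specialize (HC y Dy). apply Rabs_le_between in HC. lra.
Qed.

End LimitsAtLimitPoints.

Lemma rel_derivative_at_of_local (D : R -> Prop) (g g' : R -> R) (x r l : R) :
  0 < r -> D x -> (forall y, D y -> Rabs (y - x) < r -> g y = g' y) ->
  derivable_pt_lim g' x l ->
  filterlim (fun y => (g y - g x) / (y - x))
    (within (fun y => D y /\ y <> x) (locally x)) (locally l).
Proof.
intros Hr Dx He Hd. apply filterlim_within_iff. intros eps Heps.
destruct (Hd eps Heps) as [d Hd'].
exists (Rmin d r). split; [apply Rmin_pos; [apply cond_pos | exact Hr]|].
intros y [Dy Hyx] Hy. pose proof (Rmin_l d r). pose proof (Rmin_r d r).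
rewrite (He y Dy), (He x Dx) by (rewrite ?Rminus_diag, ?Rabs_R0; lra).
replace y with (x + (y - x)) at 1 by ring.
apply Hd'; lra.
Qed.

Lemma rel_continuous_at_of_local (D : R -> Prop) (g g' : R -> R) (x r : R) :
  0 < r -> D x -> (forall y, D y -> Rabs (y - x) < r -> g y = g' y) ->
  continuity_pt g' x -> filterlim g (within D (locally x)) (locally (g x)).
Proof.
intros Hr Dx He Hc. apply filterlim_within_iff.
rewrite (He x Dx) by (rewrite Rminus_diag, Rabs_R0; exact Hr).
apply (lim_within_ext_loc D g' g x _ r Hr); [intros y Dy Hy; symmetry; auto|].
now apply lim_within_continuity_pt.
Qed.

Lemma derivable_pt_lim_of_rel_derivative (D : R -> Prop) (g : R -> R) (dg x r : R) :
  0 < r -> (forall y, Rabs (y - x) < r -> D y) ->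
  filterlim (fun y => (g y - g x) / (y - x))
    (within (fun y => D y /\ y <> x) (locally x)) (locally dg) ->
  derivable_pt_lim g x dg.
Proof.
intros Hr HD H. apply filterlim_within_iff in H. intros eps Heps.
destruct (H eps Heps) as [d [Hd H']].
exists (mkposreal (Rmin d r) (Rmin_pos _ _ Hd Hr)). simpl. intros h Hh Hhr.
pose proof (Rmin_l d r). pose proof (Rmin_r d r).
replace h with ((x + h) - x) at 2 by ring.
assert (Hxh : x + h - x = h) by ring.
apply H'; [split|]; [apply HD | |]; rewrite ?Hxh; lra.
Qed.

Lemma lim_within_of_rel_derivative (D : R -> Prop) (g : R -> R) (dg x : R) : D x ->
  filterlim (fun y => (g y - g x) / (y - x))
    (within (fun y => D y /\ y <> x) (locally x)) (locally dg) ->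
  lim_within D g x (g x).
Proof.
intros Dx H. apply filterlim_within_iff in H.
destruct (H 1 Rlt_0_1) as [d [Hd H']].
set (K := Rabs dg + 1). assert (HK : 0 < K) by (pose proof (Rabs_pos dg); unfold K; lra).
intros eps Heps. exists (Rmin d (eps / K)).
split; [apply Rmin_pos; [exact Hd | now apply Rdiv_lt_0_compat]|].
intros y Dy Hy. pose proof (Rmin_l d (eps / K)). pose proof (Rmin_r d (eps / K)).
destruct (Req_dec y x) as [->|Hyx]; [now rewrite Rminus_diag, Rabs_R0|].
set (q := (g y - g x) / (y - x)).
assert (Hq : Rabs q <= K).
{ specialize (H' y (conj Dy Hyx) ltac:(lra)). fold q in H'.
  pose proof (Rabs_triang (q - dg) dg) as Ht. replace (q - dg + dg) with q in Ht by ring.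
  unfold K; lra. }
replace (g y - g x) with (q * (y - x)) by (unfold q; field; lra).
rewrite Rabs_mult. apply Rle_lt_trans with (K * Rabs (y - x)).
- apply Rmult_le_compat_r; [apply Rabs_pos | exact Hq].
- apply Rmult_lt_reg_l with (/ K); [now apply Rinv_0_lt_compat|].
  rewrite <- Rmult_assoc, Rinv_l, Rmult_1_l by lra. unfold Rdiv in *. lra.
Qed.

Section ZeroDerivative.
Variables (w : R -> R) (a b : R).
Hypothesis Hw : forall x, a < x < b -> derivable_pt_lim w x 0.

Lemma constant_of_derivative_zero x y : a < x < b -> a < y < b -> w x = w y.
Proof.
assert (Hle : forall x y, a < x < b -> a < y < b -> x <= y -> w x = w y).
{ clear x y. intros x y Hx Hy Hxy.
  destruct (MVT_gen w x y (fun _ => 0)) as [c [_ Hc]]; [| |lra].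
  - intros z Hz. rewrite Rmin_left, Rmax_right in Hz by lra.
    apply is_derive_Reals, Hw. lra.
  - intros z Hz. rewrite Rmin_left, Rmax_right in Hz by lra.
    apply derivable_continuous_pt. exists 0. apply Hw. lra. }
intros Hx Hy. destruct (Rle_dec x y); [now apply Hle|]. symmetry; apply Hle; auto; lra.
Qed.

Hypothesis Hab : a < b.

Lemma constant_of_derivative_zero_left_end :
  lim_within (fun y => a < y < b) w a (w a) -> forall x, a < x < b -> w a = w x.
Proof.
intros Hl x Hx. apply (lim_within_unique _ w a (limit_point_open_interval_left a b Hab)); auto.
intros eps Heps. exists 1. split; [lra|]. intros y Dy _.
rewrite (constant_of_derivative_zero y x Dy Hx), Rminus_diag, Rabs_R0. exact Heps.
Qed.

Lemma constant_of_derivative_zero_right_end :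
  lim_within (fun y => a < y < b) w b (w b) -> forall x, a < x < b -> w b = w x.
Proof.
intros Hl x Hx. apply (lim_within_unique _ w b (limit_point_open_interval_right a b Hab)); auto.
intros eps Heps. exists 1. split; [lra|]. intros y Dy _.
rewrite (constant_of_derivative_zero y x Dy Hx), Rminus_diag, Rabs_R0. exact Heps.
Qed.

End ZeroDerivative.

Lemma regular_derivable_interior dl u du d2u : regular dl u du d2u ->
  forall x, 0 < x < dl -> derivable_pt_lim u x (du x) /\ derivable_pt_lim du x (d2u x).
Proof.
intros [Hu [_ [Hdu _]]] x Hx.
assert (Hr : 0 < Rmin x (dl - x)) by (apply Rmin_pos; lra).
assert (Hnb : forall y, Rabs (y - x) < Rmin x (dl - x) -> 0 < y < dl).
{ intros y Hy. apply Rabs_def2 in Hy.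
  pose proof (Rmin_l x (dl - x)). pose proof (Rmin_r x (dl - x)). lra. }
split.
- apply (derivable_pt_lim_of_rel_derivative (Icc 0 dl) u (du x) x _ Hr).
  + intros y Hy. apply Hnb in Hy. unfold Icc; lra.
  + apply Hu. unfold Icc; lra.
- apply (derivable_pt_lim_of_rel_derivative (Ico 0 dl) du (d2u x) x _ Hr).
  + intros y Hy. apply Hnb in Hy. unfold Ico; lra.
  + apply Hdu. unfold Ico; lra.
Qed.

Lemma continuity_pt_comp_retraction (D : R -> Prop) (r g : R -> R) :
  (forall z, D (r z)) -> (forall y z, Rabs (r y - r z) <= Rabs (y - z)) ->
  (forall x, D x -> lim_within D g x (g x)) ->
  forall z, continuity_pt (fun t => g (r t)) z.
Proof.
intros HD Hr Hc z. apply continuity_pt_iff_lim_within. intros eps Heps.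
destruct (Hc (r z) (HD z) eps Heps) as [d [Hd H']].
exists d; split; [exact Hd|]. intros y _ Hy. apply H'; [apply HD|].
eapply Rle_lt_trans; [apply Hr | exact Hy].
Qed.

Lemma Rmax_0_lipschitz y z : Rabs (Rmax 0 y - Rmax 0 z) <= Rabs (y - z).
Proof. unfold Rmax, Rabs. repeat destruct Rle_dec; repeat destruct Rcase_abs; lra. Qed.

Definition clamp (a c z : R) : R := Rmax a (Rmin c z).

Section Clamp.
Variables (a c : R).
Hypothesis Hac : a <= c.

Lemma clamp_in z : a <= clamp a c z <= c.
Proof. unfold clamp, Rmax, Rmin. repeat destruct Rle_dec; lra. Qed.

Lemma clamp_id z : a <= z <= c -> clamp a c z = z.
Proof. intros. unfold clamp, Rmax, Rmin. repeat destruct Rle_dec; lra. Qed.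

Lemma clamp_lipschitz y z : Rabs (clamp a c y - clamp a c z) <= Rabs (y - z).
Proof.
unfold clamp, Rmax, Rmin, Rabs. repeat destruct Rle_dec; repeat destruct Rcase_abs; lra.
Qed.

End Clamp.

Lemma ex_RInt_continuity_pt (f : R -> R) a b : (forall z, continuity_pt f z) -> ex_RInt f a b.
Proof.
intros H. apply (ex_RInt_continuous (V := R_CompleteNormedModule)).
intros z _. now apply continuity_pt_filterlim.
Qed.

Lemma derivable_pt_lim_RInt_upper (f : R -> R) a x : (forall z, continuity_pt f z) ->
  derivable_pt_lim (fun y => RInt f a y) x (f x).
Proof.
intros H. apply is_derive_Reals, (is_derive_RInt f _ a).
- apply filter_forall. intros y.
  now apply (RInt_correct (V := R_CompleteNormedModule)), ex_RInt_continuity_pt.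
- now apply continuity_pt_filterlim.
Qed.

Lemma derivable_pt_lim_RInt_lower (f : R -> R) b x : (forall z, continuity_pt f z) ->
  derivable_pt_lim (fun y => RInt f y b) x (- f x).
Proof.
intros H. apply is_derive_Reals, (is_derive_RInt' f _ x b).
- apply filter_forall. intros y.
  now apply (RInt_correct (V := R_CompleteNormedModule)), ex_RInt_continuity_pt.
- now apply continuity_pt_filterlim.
Qed.

Lemma continuity_pt_RInt_lower (f : R -> R) b x : (forall z, continuity_pt f z) ->
  continuity_pt (fun y => RInt f y b) x.
Proof.
intros H. apply derivable_continuous_pt. eexists. now apply derivable_pt_lim_RInt_lower.
Qed.

Lemma derivable_pt_lim_eq_value (f : R -> R) x l l' :
  derivable_pt_lim f x l -> l = l' -> derivable_pt_lim f x l'.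
Proof. now intros H <-. Qed.

(** * Scale and speed densities on one edge *)

Lemma continuity_pt_Rmax_0 (g : R -> R) :
  rel_continuous_on (fun x => 0 <= x) g -> forall z, continuity_pt (fun t => g (Rmax 0 t)) z.
Proof.
intros Hg. apply (continuity_pt_comp_retraction (fun x => 0 <= x)).
- intros; apply Rmax_l.
- apply Rmax_0_lipschitz.
- intros x Hx. now apply filterlim_within_iff, Hg.
Qed.

Lemma exp_le_exp x y : x <= y -> exp x <= exp y.
Proof. intros [H | ->]; [left; now apply exp_increasing | apply Rle_refl]. Qed.

Definition admissible_coefficients (s0 B : R) (s b : R -> R) : Prop :=
  0 < s0 /\ rel_continuous_on (fun x => 0 <= x) s /\ rel_continuous_on (fun x => 0 <= x) b /\
  forall z, 0 <= z -> s0 <= s z /\ Rabs (b z) <= B.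

Definition drift_bound (s0 B : R) : R := 2 * B / s0 ^ 2.

(* [scale_density] is the integrand of [alpha], and [fi * speed_density] that of the inner
   integral of [beta]. The coefficients are read through the 1-Lipschitz retraction [Rmax 0]
   onto [[0, oo)], which makes these integrands continuous on all of R. *)
Definition drift_ratio (s b : R -> R) (z : R) : R := 2 * b (Rmax 0 z) / s (Rmax 0 z) ^ 2.
Definition scale_exponent (s b : R -> R) (y : R) : R := RInt (drift_ratio s b) 0 y.
Definition scale_density (s b : R -> R) (y : R) : R := exp (- scale_exponent s b y).
Definition speed_density (s b : R -> R) (z : R) : R :=
  2 / s (Rmax 0 z) ^ 2 * exp (scale_exponent s b z).

Lemma scale_exponent_0 s b : scale_exponent s b 0 = 0.
Proof. unfold scale_exponent. now rewrite RInt_point. Qed.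

Lemma scale_density_0 s b : scale_density s b 0 = 1.
Proof. unfold scale_density. now rewrite scale_exponent_0, Ropp_0, exp_0. Qed.

Lemma scale_density_pos s b y : 0 < scale_density s b y.
Proof. apply exp_pos. Qed.

Lemma intB_eq_scale_exponent (s b : R -> R) (y : R) : 0 <= y -> intB s b y = scale_exponent s b y.
Proof.
intros Hy. apply RInt_ext. intros z Hz. rewrite Rmin_left in Hz by lra.
unfold drift_ratio. now rewrite Rmax_right by lra.
Qed.

Section Coefficients.
Context {s0 B : R} {s b : R -> R} (HE : admissible_coefficients s0 B s b).

Lemma coefficient_sigma_pos z : 0 <= z -> 0 < s z.
Proof. destruct HE as [H0 [_ [_ H]]]. intros Hz. destruct (H z Hz). lra. Qed.

Lemma drift_bound_nonneg : 0 <= drift_bound s0 B.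
Proof.
destruct HE as [H0 [_ [_ H]]]. destruct (H 0 (Rle_refl 0)) as [_ Hb].
pose proof (Rabs_pos (b 0)). pose proof (pow_lt s0 2 H0).
unfold drift_bound, Rdiv. apply Rmult_le_pos; [lra | left; now apply Rinv_0_lt_compat].
Qed.

Lemma continuity_pt_drift_ratio z : continuity_pt (drift_ratio s b) z.
Proof.
destruct HE as [_ [Hs [Hb _]]]. unfold drift_ratio.
apply continuity_pt_div;
  [apply continuity_pt_mult; [apply continuity_pt_const; now intros ? ?|]|..].
- now apply continuity_pt_Rmax_0.
- now apply continuity_pt_mult, continuity_pt_mult, continuity_pt_const;
    [apply continuity_pt_Rmax_0 ..| intros ? ?].
- apply pow_nonzero, Rgt_not_eq, coefficient_sigma_pos, Rmax_l.
Qed.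

Lemma drift_ratio_bound z : Rabs (drift_ratio s b z) <= drift_bound s0 B.
Proof.
destruct HE as [H0 [_ [_ H]]]. destruct (H (Rmax 0 z) (Rmax_l 0 z)) as [Hs Hb].
set (m := Rmax 0 z) in *.
assert (Hs2 : s0 ^ 2 <= s m ^ 2) by (apply pow_incr; lra).
assert (Hp : 0 < s0 ^ 2) by (apply pow_lt; lra).
unfold drift_ratio, drift_bound. fold m. unfold Rdiv.
rewrite !Rabs_mult, (Rabs_right 2), (Rabs_right (/ _))
  by (try left; try apply Rinv_0_lt_compat; lra).
apply Rmult_le_compat;
  [pose proof (Rabs_pos (b m)); lra | left; apply Rinv_0_lt_compat; lra | lra |].
apply Rinv_le_contravar; lra.
Qed.

Lemma derivable_pt_lim_scale_exponent y :
  derivable_pt_lim (scale_exponent s b) y (drift_ratio s b y).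
Proof. apply derivable_pt_lim_RInt_upper, continuity_pt_drift_ratio. Qed.

Lemma continuity_pt_scale_exponent y : continuity_pt (scale_exponent s b) y.
Proof. apply derivable_continuous_pt. eexists. apply derivable_pt_lim_scale_exponent. Qed.

Lemma derivable_pt_lim_scale_density y :
  derivable_pt_lim (scale_density s b) y (- drift_ratio s b y * scale_density s b y).
Proof.
eapply derivable_pt_lim_eq_value.
- apply (derivable_pt_lim_comp (fun t => - scale_exponent s b t) exp).
  + apply derivable_pt_lim_opp, derivable_pt_lim_scale_exponent.
  + apply derivable_pt_lim_exp.
- unfold scale_density. ring.
Qed.

Lemma continuity_pt_scale_density y : continuity_pt (scale_density s b) y.
Proof. apply derivable_continuous_pt. eexists. apply derivable_pt_lim_scale_density. Qed.

Lemma continuity_pt_speed_density z : continuity_pt (speed_density s b) z.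
Proof.
destruct HE as [_ [Hs _]]. unfold speed_density. apply continuity_pt_mult.
- apply continuity_pt_div; [apply continuity_pt_const; now intros ? ?| |].
  + now apply continuity_pt_mult, continuity_pt_mult, continuity_pt_const;
      [apply continuity_pt_Rmax_0 ..| intros ? ?].
  + apply pow_nonzero, Rgt_not_eq, coefficient_sigma_pos, Rmax_l.
- apply (continuity_pt_comp (scale_exponent s b) exp); [apply continuity_pt_scale_exponent|].
  apply derivable_continuous_pt, derivable_pt_exp.
Qed.

Lemma scale_exponent_bound y : 0 <= y -> Rabs (scale_exponent s b y) <= drift_bound s0 B * y.
Proof.
intros Hy. unfold scale_exponent.
replace (drift_bound s0 B * y) with ((y - 0) * drift_bound s0 B) by ring.
apply abs_RInt_le_const; [exact Hy | |intros; apply drift_ratio_bound].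
apply ex_RInt_continuity_pt, continuity_pt_drift_ratio.
Qed.

Lemma scale_density_bounds y : 0 <= y ->
  exp (- (drift_bound s0 B * y)) <= scale_density s b y <= exp (drift_bound s0 B * y).
Proof.
intros Hy. pose proof (scale_exponent_bound y Hy) as H. apply Rabs_le_between in H.
unfold scale_density. split; apply exp_le_exp; lra.
Qed.

Lemma speed_density_bound z : 0 <= z ->
  Rabs (speed_density s b z) <= 2 / s0 ^ 2 * exp (drift_bound s0 B * z).
Proof.
intros Hz. destruct HE as [H0 [_ [_ H]]]. destruct (H (Rmax 0 z) (Rmax_l 0 z)) as [Hs _].
assert (Hs2 : s0 ^ 2 <= s (Rmax 0 z) ^ 2) by (apply pow_incr; lra).
assert (Hp : 0 < s0 ^ 2) by (apply pow_lt; lra).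
pose proof (scale_exponent_bound z Hz) as HP. apply Rabs_le_between in HP.
unfold speed_density, Rdiv.
rewrite !Rabs_mult, (Rabs_right 2), (Rabs_right (/ _)), (Rabs_right (exp _))
  by (try left; try apply exp_pos; try apply Rinv_0_lt_compat; lra).
apply Rmult_le_compat; [| left; apply exp_pos | | apply exp_le_exp; lra].
- apply Rmult_le_pos; [lra | left; apply Rinv_0_lt_compat; lra].
- apply Rmult_le_compat_l; [lra | apply Rinv_le_contravar; lra].
Qed.

End Coefficients.

(** * Solutions on one edge *)

Definition bounded_continuous_data (dl Bf : R) (fi : R -> R) : Prop :=
  (forall x, 0 <= x < dl -> Rabs (fi x) <= Bf) /\ rel_continuous_on (Ico 0 dl) fi.

Definition speed_integral (s b fi : R -> R) (y : R) : R :=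
  RInt (fun z => fi z * speed_density s b z) 0 y.

(* [fi] is only controlled on [[0, dl)]; clamping its argument to [[0, y0]] with [y0 < dl]
   gives an integrand continuous on all of R that agrees with the true one on [[0, y0]]. *)
Definition speed_integral_trunc (s b fi : R -> R) (y0 y : R) : R :=
  RInt (fun z => fi (clamp 0 y0 z) * speed_density s b z) 0 y.

(* The left limit exists because [speed_integral] is Lipschitz on [[0, dl)]
   ([speed_integral_left_limit]); [epsilon] only names it. *)
Definition speed_integral_end (s b fi : R -> R) (dl : R) : R :=
  epsilon (inhabits 0) (fun l => filterlim (speed_integral s b fi) (at_left dl) (locally l)).

(* The integrand of [beta], closed up at [dl] by its left limit: the value at [dl] does not
   change the integral but makes [u'] continuous up to [dl]. *)
Definition beta_integrand (s b fi : R -> R) (dl y : R) : R :=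
  if Rlt_dec y dl then speed_integral s b fi y * scale_density s b y
  else speed_integral_end s b fi dl * scale_density s b dl.

Definition speed_integrand_bound (s0 B dl Bf : R) : R :=
  Bf * (2 / s0 ^ 2 * exp (drift_bound s0 B * dl)).

Lemma beta_integrand_lt s b fi dl y : y < dl ->
  beta_integrand s b fi dl y = speed_integral s b fi y * scale_density s b y.
Proof. intros. unfold beta_integrand. destruct Rlt_dec; [reflexivity | lra]. Qed.

Lemma beta_integrand_0 s b fi dl : 0 < dl -> beta_integrand s b fi dl 0 = 0.
Proof.
intros. rewrite beta_integrand_lt by lra. unfold speed_integral.
rewrite RInt_point. unfold zero; simpl. ring.
Qed.

Lemma alpha_eq_RInt s b dl x : 0 <= x <= dl -> alpha s b dl x = RInt (scale_density s b) x dl.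
Proof.
intros Hx. apply RInt_ext. intros y Hy. rewrite Rmin_left in Hy by lra.
unfold scale_density. rewrite intB_eq_scale_exponent by lra. reflexivity.
Qed.

Lemma beta_eq_RInt s b fi dl x : 0 <= x <= dl ->
  beta s b fi dl x = RInt (fun y => beta_integrand s b fi dl (clamp 0 dl y)) x dl.
Proof.
intros Hx. apply RInt_ext. intros y Hy. rewrite Rmin_left, Rmax_right in Hy by lra.
rewrite clamp_id, beta_integrand_lt by lra.
unfold scale_density. rewrite intB_eq_scale_exponent by lra. f_equal.
apply RInt_ext. intros z Hz. rewrite Rmin_left, Rmax_right in Hz by lra.
unfold speed_density. rewrite Rmax_right, intB_eq_scale_exponent by lra.
unfold Rdiv. now rewrite (Rmult_comm 2 (fi z)), !Rmult_assoc.
Qed.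

Definition edge_slope (s b fi : R -> R) (dl c x : R) : R :=
  c * scale_density s b x + beta_integrand s b fi dl x.

Definition edge_curvature (s b fi : R -> R) (c x : R) : R :=
  (fi x * speed_density s b x - (c + speed_integral s b fi x) * drift_ratio s b x)
  * scale_density s b x.

Lemma edge_slope_0 s b fi dl c : 0 < dl -> edge_slope s b fi dl c 0 = c.
Proof. intros. unfold edge_slope. rewrite scale_density_0, beta_integrand_0 by lra. ring. Qed.

Lemma speed_integrand_bound_mono s0 B dl dl' Bf : 0 < s0 -> 0 <= Bf -> 0 <= drift_bound s0 B ->
  dl <= dl' -> speed_integrand_bound s0 B dl Bf <= speed_integrand_bound s0 B dl' Bf.
Proof.
intros Hs0 HBf Hk Hdl. unfold speed_integrand_bound. apply Rmult_le_compat_l; [exact HBf|].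
apply Rmult_le_compat_l; [apply Rlt_le, Rdiv_lt_0_compat; [lra | now apply pow_lt]|].
apply exp_le_exp, Rmult_le_compat_l; assumption.
Qed.

Section Edge.
Context {s0 B : R} {s b : R -> R} (HE : admissible_coefficients s0 B s b).
Context {dl Bf : R} {fi : R -> R} (Hdl : 0 < dl) (HF : bounded_continuous_data dl Bf fi).

Let hm := speed_integrand_bound s0 B dl Bf.

Lemma continuity_pt_trunc_integrand y0 z : 0 <= y0 < dl ->
  continuity_pt (fun t => fi (clamp 0 y0 t) * speed_density s b t) z.
Proof.
intros Hy0. apply continuity_pt_mult; [|exact (continuity_pt_speed_density HE z)].
apply (continuity_pt_comp_retraction (Icc 0 y0) (clamp 0 y0) fi).
- intros t. apply clamp_in. lra.
- intros; apply clamp_lipschitz; lra.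
- intros x Hx. destruct HF as [_ Hc]. unfold Icc in Hx.
  apply (lim_within_subset (Ico 0 dl)); [unfold Icc, Ico; intros; lra|].
  apply filterlim_within_iff, Hc. unfold Ico; lra.
Qed.

Lemma speed_integral_trunc_eq y0 y : 0 <= y <= y0 ->
  speed_integral_trunc s b fi y0 y = speed_integral s b fi y.
Proof.
intros Hy. apply RInt_ext. intros z Hz. rewrite Rmin_left, Rmax_right in Hz by lra.
rewrite clamp_id by lra. reflexivity.
Qed.

Lemma derivable_pt_lim_speed_integral_trunc y0 x : 0 <= y0 < dl ->
  derivable_pt_lim (speed_integral_trunc s b fi y0) x
    (fi (clamp 0 y0 x) * speed_density s b x).
Proof.
intros Hy0. apply (derivable_pt_lim_RInt_upper (fun t => fi (clamp 0 y0 t) * speed_density s b t)).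
intros z. now apply continuity_pt_trunc_integrand.
Qed.

Lemma continuity_pt_speed_integral_trunc y0 x : 0 <= y0 < dl ->
  continuity_pt (speed_integral_trunc s b fi y0) x.
Proof.
intros. apply derivable_continuous_pt. eexists. now apply derivable_pt_lim_speed_integral_trunc.
Qed.

Lemma derivable_pt_lim_speed_integral x : 0 < x < dl ->
  derivable_pt_lim (speed_integral s b fi) x (fi x * speed_density s b x).
Proof.
intros Hx. set (y0 := (x + dl) / 2). apply is_derive_Reals.
apply (is_derive_ext_loc (speed_integral_trunc s b fi y0)).
- exists (mkposreal (Rmin x (dl - x) / 2) ltac:(apply Rdiv_lt_0_compat; [apply Rmin_pos|]; lra)).
  intros t Ht. change (Rabs (t - x) < Rmin x (dl - x) / 2) in Ht. apply Rabs_def2 in Ht.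
  pose proof (Rmin_l x (dl - x)). pose proof (Rmin_r x (dl - x)).
  apply speed_integral_trunc_eq. unfold y0; lra.
- apply is_derive_Reals.
  replace (fi x) with (fi (clamp 0 y0 x)) by (rewrite clamp_id; unfold y0; lra).
  apply (derivable_pt_lim_speed_integral_trunc). unfold y0; lra.
Qed.

Lemma speed_integrand_bounded z : 0 <= z < dl -> Rabs (fi z * speed_density s b z) <= hm.
Proof.
intros Hz. destruct HF as [Hf _]. rewrite Rabs_mult. unfold hm, speed_integrand_bound.
pose proof (drift_bound_nonneg HE).
apply Rmult_le_compat; [apply Rabs_pos | apply Rabs_pos | now apply Hf |].
eapply Rle_trans; [apply (speed_density_bound HE); lra|].
apply Rmult_le_compat_l.
- pose proof (pow_lt s0 2 (proj1 HE)). unfold Rdiv.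
  apply Rmult_le_pos; [lra | left; now apply Rinv_0_lt_compat].
- apply exp_le_exp, Rmult_le_compat_l; lra.
Qed.

Lemma speed_integrand_bound_nonneg : 0 <= hm.
Proof. eapply Rle_trans; [apply Rabs_pos | apply (speed_integrand_bounded 0); lra]. Qed.

Lemma speed_integral_lipschitz y y' : 0 <= y <= y' -> y' < dl ->
  Rabs (speed_integral s b fi y' - speed_integral s b fi y) <= hm * (y' - y).
Proof.
intros Hy Hy'.
rewrite <- (speed_integral_trunc_eq y' y), <- (speed_integral_trunc_eq y' y') by lra.
unfold speed_integral_trunc.
assert (Hex : forall a c, ex_RInt (fun z => fi (clamp 0 y' z) * speed_density s b z) a c).
{ intros a c. apply ex_RInt_continuity_pt. intros z. apply continuity_pt_trunc_integrand. lra. }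
set (g := fun z => fi (clamp 0 y' z) * speed_density s b z).
assert (Hch : RInt g 0 y + RInt g y y' = RInt g 0 y')
  by exact (RInt_Chasles (V := R_CompleteNormedModule) g 0 y y' (Hex 0 y) (Hex y y')).
rewrite <- Hch, Rplus_minus_l.
rewrite Rmult_comm. apply abs_RInt_le_const; [lra | apply Hex|].
intros t Ht. unfold g. rewrite clamp_id by lra. apply speed_integrand_bounded. lra.
Qed.

Lemma speed_integral_bound y : 0 <= y < dl -> Rabs (speed_integral s b fi y) <= hm * y.
Proof.
intros Hy.
replace (speed_integral s b fi y) with (speed_integral s b fi y - speed_integral s b fi 0).
- replace y with (y - 0) at 2 by ring. apply speed_integral_lipschitz; lra.
- unfold speed_integral at 2. rewrite RInt_point. unfold zero; simpl. ring.
Qed.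

Lemma speed_integral_left_limit :
  filterlim (speed_integral s b fi) (at_left dl) (locally (speed_integral_end s b fi dl)).
Proof.
apply (epsilon_spec (inhabits 0)
         (fun l => filterlim (speed_integral s b fi) (at_left dl) (locally l))).
apply (filterlim_locally_cauchy (U := R_CompleteSpace) (F := at_left dl)).
intros eps. pose proof speed_integrand_bound_nonneg. pose proof (cond_pos eps).
set (d := Rmin dl (eps / (2 * (hm + 1)))).
assert (Hd : 0 < d) by (apply Rmin_pos; [lra | apply Rdiv_lt_0_compat; lra]).
assert (Hd1 : d <= dl) by apply Rmin_l.
assert (Hd2 : (hm + 1) * d <= eps / 2).
{ replace (eps / 2) with ((hm + 1) * (eps / (2 * (hm + 1)))) by (field; lra).
  apply Rmult_le_compat_l; [lra | apply Rmin_r]. }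
exists (fun y => dl - d < y < dl). split.
- exists (mkposreal d Hd). intros y Hy Hlt.
  change (Rabs (y - dl) < d) in Hy. apply Rabs_def2 in Hy. lra.
- assert (Hx : forall u v, dl - d < u < dl -> dl - d < v < dl -> u <= v ->
    Rabs (speed_integral s b fi v - speed_integral s b fi u) < eps).
  { intros u v Hu Hv Huv. eapply Rle_lt_trans; [apply speed_integral_lipschitz; lra|].
    assert (hm * (v - u) <= (hm + 1) * d) by (apply Rmult_le_compat; lra). lra. }
  intros u v Hu Hv. change (Rabs (speed_integral s b fi v - speed_integral s b fi u) < eps).
  destruct (Rle_dec u v); [now apply Hx|].
  rewrite <- Rabs_Ropp, Ropp_minus_distr. apply Hx; auto; lra.
Qed.

Lemma speed_integral_end_bound : Rabs (speed_integral_end s b fi dl) <= hm * dl.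
Proof.
apply (lim_within_abs_le _ (speed_integral s b fi) dl (limit_point_open_interval_right 0 dl Hdl)).
- apply (lim_within_subset (fun y => y < dl)); [intros; lra|].
  apply filterlim_within_iff, speed_integral_left_limit.
- intros y Hy. eapply Rle_trans; [apply speed_integral_bound; lra|].
  apply Rmult_le_compat_l; [apply speed_integrand_bound_nonneg | lra].
Qed.

Lemma lim_within_beta_integrand x : Icc 0 dl x ->
  lim_within (Icc 0 dl) (beta_integrand s b fi dl) x (beta_integrand s b fi dl x).
Proof.
intros Hx. unfold Icc in Hx. destruct (Rlt_dec x dl) as [Hlt|Hge].
- set (y0 := (x + dl) / 2). apply filterlim_within_iff.
  apply (rel_continuous_at_of_local _ _
           (fun y => speed_integral_trunc s b fi y0 y * scale_density s b y) x ((dl - x) / 2)).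
  + lra.
  + unfold Icc; lra.
  + intros y Hy Hyx. unfold Icc in Hy. apply Rabs_def2 in Hyx.
    rewrite beta_integrand_lt, speed_integral_trunc_eq by (unfold y0; lra). reflexivity.
  + apply continuity_pt_mult; [apply continuity_pt_speed_integral_trunc; unfold y0; lra|].
    apply (continuity_pt_scale_density HE).
- assert (x = dl) as -> by lra.
  assert (L : lim_within (fun y => y < dl)
                (fun y => speed_integral s b fi y * scale_density s b y) dl
                (speed_integral_end s b fi dl * scale_density s b dl)).
  { apply lim_within_mult; [apply filterlim_within_iff, speed_integral_left_limit|].
    apply lim_within_continuity_pt, (continuity_pt_scale_density HE). }
  intros eps Heps. destruct (L eps Heps) as [d [Hd L']]. exists d. split; [exact Hd|].
  intros y Hy Hyd. unfold beta_integrand at 2. destruct (Rlt_dec dl dl); [lra|].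
  unfold beta_integrand. destruct (Rlt_dec y dl); [now apply L'|].
  unfold Icc in Hy. assert (y = dl) as -> by lra. now rewrite Rminus_diag, Rabs_R0.
Qed.

Lemma continuity_pt_beta_integrand_clamp z :
  continuity_pt (fun y => beta_integrand s b fi dl (clamp 0 dl y)) z.
Proof.
apply (continuity_pt_comp_retraction (Icc 0 dl) (clamp 0 dl)).
- intros t. apply clamp_in. lra.
- intros; apply clamp_lipschitz; lra.
- exact lim_within_beta_integrand.
Qed.

Lemma beta_integrand_bound y : 0 <= y <= dl ->
  Rabs (beta_integrand s b fi dl y) <= hm * dl * exp (drift_bound s0 B * dl).
Proof.
intros Hy. pose proof speed_integrand_bound_nonneg. pose proof (drift_bound_nonneg HE).
assert (HEb : forall t, 0 <= t <= dl -> Rabs (scale_density s b t) <= exp (drift_bound s0 B * dl)).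
{ intros t Ht. rewrite Rabs_right by (left; apply scale_density_pos).
  eapply Rle_trans; [apply (scale_density_bounds HE); lra|].
  apply exp_le_exp, Rmult_le_compat_l; lra. }
unfold beta_integrand. destruct Rlt_dec; rewrite Rabs_mult;
  (apply Rmult_le_compat; [apply Rabs_pos | apply Rabs_pos | | apply HEb; lra]).
- eapply Rle_trans; [apply speed_integral_bound; lra | apply Rmult_le_compat_l; lra].
- apply speed_integral_end_bound.
Qed.

Let Gclamp := fun y => beta_integrand s b fi dl (clamp 0 dl y).

Section Existence.
Variables (u : R -> R) (c : R).
Hypothesis Hu : forall x, 0 <= x <= dl -> u x = - c * alpha s b dl x - beta s b fi dl x.

Lemma rel_derivative_edge_solution : rel_derivative_on (Icc 0 dl) u (edge_slope s b fi dl c).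
Proof.
intros x Hx. unfold Icc in Hx.
apply (rel_derivative_at_of_local _ _
         (fun y => - c * RInt (scale_density s b) y dl - RInt Gclamp y dl) x 1);
  [lra | exact Hx | |].
- intros y Hy _. unfold Icc in Hy.
  now rewrite Hu, alpha_eq_RInt, beta_eq_RInt by lra.
- eapply derivable_pt_lim_eq_value.
  + apply derivable_pt_lim_minus; [apply derivable_pt_lim_scal|];
      apply derivable_pt_lim_RInt_lower;
      [apply (continuity_pt_scale_density HE) | apply (continuity_pt_beta_integrand_clamp)].
  + unfold edge_slope, Gclamp. rewrite clamp_id by lra. ring.
Qed.

End Existence.

Lemma rel_continuous_edge_slope c : rel_continuous_on (Icc 0 dl) (edge_slope s b fi dl c).
Proof.
intros x Hx.
apply (rel_continuous_at_of_local _ _ (fun y => c * scale_density s b y + Gclamp y) x 1);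
  [lra | exact Hx | |].
- intros y Hy _. unfold Icc in Hy. unfold edge_slope, Gclamp. rewrite clamp_id by lra. reflexivity.
- apply continuity_pt_plus;
    [apply continuity_pt_mult; [apply continuity_pt_const; now intros ? ?|]|].
  + apply (continuity_pt_scale_density HE).
  + apply (continuity_pt_beta_integrand_clamp).
Qed.

Lemma rel_derivative_edge_slope c :
  rel_derivative_on (Ico 0 dl) (edge_slope s b fi dl c) (edge_curvature s b fi c).
Proof.
intros x Hx. unfold Ico in Hx. set (y0 := (x + dl) / 2).
apply (rel_derivative_at_of_local _ _
         (fun y => (c + speed_integral_trunc s b fi y0 y) * scale_density s b y) x ((dl - x) / 2));
  [lra | unfold Ico; lra | |].
- intros y Hy Hyx. unfold Ico in Hy. apply Rabs_def2 in Hyx. unfold edge_slope.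
  rewrite beta_integrand_lt, speed_integral_trunc_eq by (unfold y0; lra). ring.
- eapply derivable_pt_lim_eq_value.
  + apply derivable_pt_lim_mult; [apply derivable_pt_lim_plus; [apply derivable_pt_lim_const|]|].
    * apply (derivable_pt_lim_speed_integral_trunc). unfold y0; lra.
    * apply (derivable_pt_lim_scale_density HE).
  + unfold edge_curvature. rewrite clamp_id, speed_integral_trunc_eq by (unfold y0; lra). ring.
Qed.

Lemma rel_continuous_edge_curvature c : rel_continuous_on (Ico 0 dl) (edge_curvature s b fi c).
Proof.
intros x Hx. unfold Ico in Hx. set (y0 := (x + dl) / 2).
assert (Hy0 : 0 <= y0 < dl) by (unfold y0; lra).
apply (rel_continuous_at_of_local _ _
         (fun y => (fi (clamp 0 y0 y) * speed_density s b y
                    - (c + speed_integral_trunc s b fi y0 y) * drift_ratio s b y)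
                   * scale_density s b y) x ((dl - x) / 2)); [lra | unfold Ico; lra | |].
- intros y Hy Hyx. unfold Ico in Hy. apply Rabs_def2 in Hyx. unfold edge_curvature.
  rewrite clamp_id, speed_integral_trunc_eq by (unfold y0; lra). reflexivity.
- apply continuity_pt_mult; [apply continuity_pt_minus; [|apply continuity_pt_mult]|].
  + apply (continuity_pt_trunc_integrand _ _ Hy0).
  + apply continuity_pt_plus; [apply continuity_pt_const; now intros ? ?|].
    apply (continuity_pt_speed_integral_trunc _ _ Hy0).
  + apply (continuity_pt_drift_ratio HE).
  + apply (continuity_pt_scale_density HE).
Qed.

Lemma edge_solution_ode c x : 0 < x < dl ->
  Lgen s b (edge_slope s b fi dl c) (edge_curvature s b fi c) x = fi x.
Proof.
intros Hx. unfold Lgen, edge_slope, edge_curvature, speed_density, drift_ratio, scale_density.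
rewrite beta_integrand_lt by lra. unfold scale_density.
rewrite Rmax_right, exp_Ropp by lra.
assert (Hs : s x <> 0) by (apply Rgt_not_eq, (coefficient_sigma_pos HE); lra).
assert (He : exp (scale_exponent s b x) <> 0) by apply Rgt_not_eq, exp_pos.
field. auto.
Qed.

Section Representation.
Variables (u du d2u : R -> R).
Hypothesis Hreg : regular dl u du d2u.
Hypothesis Hode : forall x, 0 < x < dl -> Lgen s b du d2u x = fi x.

Lemma regular_solution_slope x : 0 <= x < dl ->
  du x = (du 0 + speed_integral s b fi x) * scale_density s b x.
Proof.
(* Integrating factor: [w] has zero derivative. *)
set (w := fun y => du y * exp (scale_exponent s b y) - speed_integral s b fi y).
assert (Dw : forall x, 0 < x < dl -> derivable_pt_lim w x 0).
{ clear x. intros x Hx. eapply derivable_pt_lim_eq_value.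
  - apply derivable_pt_lim_minus; [apply derivable_pt_lim_mult|].
    + exact (proj2 (regular_derivable_interior dl u du d2u Hreg x Hx)).
    + apply (derivable_pt_lim_comp (scale_exponent s b) exp);
        [apply (derivable_pt_lim_scale_exponent HE) | apply derivable_pt_lim_exp].
    + exact (derivable_pt_lim_speed_integral x Hx).
  - rewrite <- (Hode x Hx). unfold Lgen, speed_density, drift_ratio. rewrite Rmax_right by lra.
    assert (Hs : s x <> 0) by (apply Rgt_not_eq, (coefficient_sigma_pos HE); lra).
    field. exact Hs. }
assert (Lw : lim_within (fun y => 0 < y < dl) w 0 (w 0)).
{ destruct Hreg as [_ [Hduc _]]. apply lim_within_minus; [apply lim_within_mult|].
  - apply (lim_within_subset (Icc 0 dl)); [unfold Icc; intros; lra|].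
    apply filterlim_within_iff, Hduc. unfold Icc; lra.
  - apply (lim_within_continuity_pt _ (fun y => exp (scale_exponent s b y))).
    apply (continuity_pt_comp (scale_exponent s b) exp).
    + apply (continuity_pt_scale_exponent HE).
    + apply derivable_continuous_pt, derivable_pt_exp.
  - apply (lim_within_ext_loc _ (speed_integral_trunc s b fi (dl / 2)) _ _ _ (dl / 2)); [lra| |].
    + intros y Hy Hy2. apply Rabs_def2 in Hy2. apply speed_integral_trunc_eq; lra.
    + rewrite <- (speed_integral_trunc_eq (dl / 2)) by lra.
      apply lim_within_continuity_pt, (continuity_pt_speed_integral_trunc). lra. }
assert (w0 : w 0 = du 0).
{ unfold w, speed_integral. rewrite scale_exponent_0, exp_0, RInt_point. unfold zero; simpl. ring. }
intros Hx. destruct (Req_dec x 0) as [->|Hx0].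
- unfold speed_integral. rewrite RInt_point, scale_density_0. unfold zero; simpl. ring.
- rewrite <- w0, (constant_of_derivative_zero_left_end w 0 dl Dw Hdl Lw x) by lra.
  unfold w, scale_density. rewrite exp_Ropp. field. apply Rgt_not_eq, exp_pos.
Qed.

Hypothesis Hudl : u dl = 0.

Lemma regular_solution_value x : 0 <= x <= dl ->
  u x = - du 0 * alpha s b dl x - beta s b fi dl x.
Proof.
intros Hx. set (c := du 0).
(* [phi] is [u + c alpha + beta]; it has zero derivative and vanishes at [dl]. *)
set (phi := fun y => u y + c * RInt (scale_density s b) y dl + RInt Gclamp y dl).
assert (Dphi : forall x, 0 < x < dl -> derivable_pt_lim phi x 0).
{ clear x Hx. intros x Hx. eapply derivable_pt_lim_eq_value.
  - apply derivable_pt_lim_plus; [apply derivable_pt_lim_plus; [|apply derivable_pt_lim_scal]|].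
    + exact (proj1 (regular_derivable_interior dl u du d2u Hreg x Hx)).
    + apply derivable_pt_lim_RInt_lower, (continuity_pt_scale_density HE).
    + apply derivable_pt_lim_RInt_lower, (continuity_pt_beta_integrand_clamp).
  - unfold Gclamp. rewrite clamp_id, beta_integrand_lt, regular_solution_slope by lra.
    unfold c. ring. }
assert (Cphi : forall x, Icc 0 dl x -> lim_within (fun y => 0 < y < dl) phi x (phi x)).
{ clear x Hx. intros x Hx. destruct Hreg as [Hu _].
  apply lim_within_plus; [apply lim_within_plus|].
  - apply (lim_within_subset (Icc 0 dl)); [unfold Icc; intros; lra|].
    exact (lim_within_of_rel_derivative _ _ _ _ Hx (Hu x Hx)).
  - apply (lim_within_continuity_pt _ (fun y => c * RInt (scale_density s b) y dl)).
    apply continuity_pt_mult; [apply continuity_pt_const; now intros ? ?|].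
    apply continuity_pt_RInt_lower, (continuity_pt_scale_density HE).
  - apply (lim_within_continuity_pt _ (fun y => RInt Gclamp y dl)).
    apply continuity_pt_RInt_lower, (continuity_pt_beta_integrand_clamp). }
assert (phi_dl : phi dl = 0).
{ unfold phi. rewrite Hudl, !RInt_point. unfold zero; simpl. ring. }
assert (Hmid : 0 < dl / 2 < dl) by lra.
assert (Hphi : phi x = 0).
{ rewrite <- phi_dl.
  assert (Hright := constant_of_derivative_zero_right_end phi 0 dl Dphi Hdl
                      (Cphi dl ltac:(unfold Icc; lra))).
  destruct (Req_dec x dl) as [->|Hxdl]; [reflexivity|].
  destruct (Req_dec x 0) as [->|Hx0]; [|symmetry; apply Hright; lra].
  rewrite (constant_of_derivative_zero_left_end phi 0 dl Dphi Hdl (Cphi 0 ltac:(unfold Icc; lra))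
             (dl / 2) Hmid).
  symmetry. now apply Hright. }
rewrite alpha_eq_RInt, beta_eq_RInt by lra. unfold phi, Gclamp in Hphi. fold c. lra.
Qed.

End Representation.

Lemma alpha_0_bounds :
  exp (- (drift_bound s0 B * dl)) * dl <= alpha s b dl 0 <= exp (drift_bound s0 B * dl) * dl.
Proof.
rewrite alpha_eq_RInt by lra. pose proof (drift_bound_nonneg HE).
assert (Hi : ex_RInt (scale_density s b) 0 dl)
  by (apply ex_RInt_continuity_pt, (continuity_pt_scale_density HE)).
assert (Hconst : forall k, RInt (fun _ => k) 0 dl = k * dl).
{ intros k. rewrite RInt_const. unfold scal; simpl. unfold mult; simpl. ring. }
rewrite <- (Hconst (exp (- _))), <- (Hconst (exp (drift_bound s0 B * dl))).
split; apply RInt_le; auto using ex_RInt_const; [lra| |lra|]; intros y Hy;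
  pose proof (scale_density_bounds HE y ltac:(lra)) as [Hlo Hhi];
  pose proof (Rmult_le_compat_l _ _ _ H (Rlt_le _ _ (proj2 Hy))).
- eapply Rle_trans; [|exact Hlo]. apply exp_le_exp. lra.
- eapply Rle_trans; [exact Hhi|]. apply exp_le_exp. lra.
Qed.

Lemma alpha_0_pos : 0 < alpha s b dl 0.
Proof.
pose proof alpha_0_bounds as [H _]. eapply Rlt_le_trans; [|exact H].
apply Rmult_lt_0_compat; [apply exp_pos | exact Hdl].
Qed.

Lemma beta_0_bound : Rabs (beta s b fi dl 0) <= dl * (hm * dl * exp (drift_bound s0 B * dl)).
Proof.
rewrite beta_eq_RInt by lra.
replace (dl * _) with ((dl - 0) * (hm * dl * exp (drift_bound s0 B * dl))) by ring.
apply abs_RInt_le_const; [lra|apply ex_RInt_continuity_pt, (continuity_pt_beta_integrand_clamp)|].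
intros t Ht. rewrite clamp_id by lra. apply (beta_integrand_bound). lra.
Qed.

Lemma regular_solution_slope_bound u du d2u : regular dl u du d2u ->
  (forall x, 0 < x < dl -> Lgen s b du d2u x = fi x) ->
  forall y, 0 <= y < dl -> Rabs (du y) <=
    (Rabs (du 0) + hm * dl) * exp (drift_bound s0 B * dl).
Proof.
intros Hreg Hode y Hy. rewrite (regular_solution_slope u du d2u Hreg Hode y Hy), Rabs_mult.
pose proof (drift_bound_nonneg HE). pose proof speed_integrand_bound_nonneg.
apply Rmult_le_compat; [apply Rabs_pos | apply Rabs_pos | |].
- eapply Rle_trans; [apply Rabs_triang|]. apply Rplus_le_compat_l.
  eapply Rle_trans; [apply (speed_integral_bound y Hy)|]. apply Rmult_le_compat_l; lra.
- rewrite Rabs_right by (left; apply scale_density_pos).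
  eapply Rle_trans; [apply (scale_density_bounds HE); lra|].
  apply exp_le_exp, Rmult_le_compat_l; lra.
Qed.

End Edge.

Lemma ode_curvature_bound {s0 B : R} {s b : R -> R} (HE : admissible_coefficients s0 B s b)
  (fi du d2u : R -> R) x : 0 < x -> Lgen s b du d2u x = fi x ->
  Rabs (d2u x) <= 2 * (Rabs (fi x) + B * Rabs (du x)) / s0 ^ 2.
Proof.
intros Hx Hode. destruct HE as [H0 [_ [_ Hb]]]. destruct (Hb x ltac:(lra)) as [Hs Hbx].
assert (Hs2 : s0 ^ 2 <= s x ^ 2) by (apply pow_incr; lra).
assert (Hp : 0 < s0 ^ 2) by (apply pow_lt; lra).
assert (Hd2 : d2u x = (fi x - b x * du x) * (2 / s x ^ 2))
  by (rewrite <- Hode; unfold Lgen; field; lra).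
rewrite Hd2, Rabs_mult, (Rabs_right (2 / s x ^ 2)) by (left; apply Rdiv_lt_0_compat; lra).
replace (2 * (Rabs (fi x) + B * Rabs (du x)) / s0 ^ 2)
  with ((Rabs (fi x) + B * Rabs (du x)) * (2 / s0 ^ 2)) by (field; lra).
apply Rmult_le_compat; [apply Rabs_pos | left; apply Rdiv_lt_0_compat; lra | |].
- eapply Rle_trans; [apply Rabs_triang|]. rewrite Rabs_Ropp, Rabs_mult.
  apply Rplus_le_compat_l, Rmult_le_compat_r; [apply Rabs_pos | exact Hbx].
- unfold Rdiv. apply Rmult_le_compat_l; [lra|]. apply Rinv_le_contravar; lra.
Qed.

(** * The linear system at the vertex *)

Lemma sum_lt_ext N (g h : nat -> R) :
  (forall i, (i < N)%nat -> g i = h i) -> sum_lt N g = sum_lt N h.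
Proof.
intros H. destruct N as [|n]; simpl; [reflexivity|]. apply sum_eq. intros i Hi; apply H; lia.
Qed.

Lemma sum_lt_plus N (g h : nat -> R) : sum_lt N (fun i => g i + h i) = sum_lt N g + sum_lt N h.
Proof. destruct N as [|n]; simpl; [ring|]. apply sum_plus. Qed.

Lemma sum_lt_scal N (g : nat -> R) x : sum_lt N (fun i => x * g i) = x * sum_lt N g.
Proof. destruct N as [|n]; simpl; [ring|]. rewrite scal_sum. apply sum_eq. intros; ring. Qed.

Lemma sum_lt_le N (g h : nat -> R) :
  (forall i, (i < N)%nat -> g i <= h i) -> sum_lt N g <= sum_lt N h.
Proof. intros H. destruct N as [|n]; simpl; [lra|]. apply sum_Rle. intros i Hi; apply H; lia. Qed.

Lemma sum_lt_abs N (g : nat -> R) : Rabs (sum_lt N g) <= sum_lt N (fun i => Rabs (g i)).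
Proof. destruct N as [|n]; simpl; [rewrite Rabs_R0; lra|]. apply sum_f_R0_triangle. Qed.

Lemma sum_lt_pos N (g : nat -> R) :
  (1 <= N)%nat -> (forall i, (i < N)%nat -> 0 < g i) -> 0 < sum_lt N g.
Proof.
intros HN H. destruct N as [|n]; [lia|]. simpl. clear HN.
induction n as [|n IH]; simpl; [apply H; lia|].
apply Rplus_lt_0_compat; [apply IH; intros; apply H|apply H]; lia.
Qed.

Definition vertex_constant N (eta : R) (rho a be : nat -> R) (fv : R) : R :=
  (eta * fv - sum_lt N (fun j => rho j * (be O - be j) / a j)) * / sum_lt N (fun j => rho j / a j).

Section VertexSystem.
Variables (N : nat) (eta fv : R) (rho a be : nat -> R).
Hypothesis HN : (1 <= N)%nat.
Hypothesis Hrho : forall i, (i < N)%nat -> 0 < rho i.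
Hypothesis Ha : forall i, (i < N)%nat -> 0 < a i.

Let S := sum_lt N (fun j => rho j / a j).
Let U := sum_lt N (fun j => rho j * be j / a j).

Lemma vertex_weight_pos : 0 < S.
Proof. apply sum_lt_pos; [exact HN|]. intros j Hj. apply Rdiv_lt_0_compat; auto. Qed.

Lemma vertex_constant_eq : vertex_constant N eta rho a be fv = (eta * fv + U) / S - be O.
Proof.
unfold vertex_constant. fold S.
replace (sum_lt N (fun j => rho j * (be O - be j) / a j)) with (be O * S - U).
- pose proof vertex_weight_pos. field. lra.
- rewrite (sum_lt_ext _ _ (fun j => be O * (rho j / a j) + (-1) * (rho j * be j / a j))).
  + rewrite sum_lt_plus, !sum_lt_scal. unfold S, U. ring.
  + intros j Hj. specialize (Ha j Hj). field. lra.
Qed.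

(* [- c_j a_j - be_j] is the value at the vertex of the edge-[j] solution with slope [c_j]. *)
Lemma vertex_flux_eq (c : nat -> R) (W : R) :
  (forall j, (j < N)%nat -> - c j * a j - be j = W) ->
  sum_lt N (fun j => rho j * c j) = - (W * S + U).
Proof.
intros Hc. rewrite (sum_lt_ext _ _ (fun j => (- W) * (rho j / a j) + (-1) * (rho j * be j / a j))).
- rewrite sum_lt_plus, !sum_lt_scal. unfold S, U. ring.
- intros j Hj. specialize (Ha j Hj). rewrite <- (Hc j Hj). field. lra.
Qed.

Lemma vertex_slopes_unique (c : nat -> R) (W : R) :
  (forall j, (j < N)%nat -> - c j * a j - be j = W) ->
  sum_lt N (fun j => rho j * c j) = eta * fv ->
  forall i, (i < N)%nat -> c i = (vertex_constant N eta rho a be fv + be O - be i) / a i.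
Proof.
intros Hc Hv i Hi. rewrite (vertex_flux_eq c W Hc) in Hv.
pose proof vertex_weight_pos. pose proof (Ha i Hi).
replace (c i) with (- (W + be i) / a i) by (rewrite <- (Hc i Hi); field; lra).
rewrite vertex_constant_eq, <- Hv. field. lra.
Qed.

Lemma vertex_slopes_sum :
  sum_lt N (fun i => rho i * ((vertex_constant N eta rho a be fv + be O - be i) / a i)) = eta * fv.
Proof.
rewrite (vertex_flux_eq (fun i => (vertex_constant N eta rho a be fv + be O - be i) / a i)
           (- (vertex_constant N eta rho a be fv + be O))).
- rewrite vertex_constant_eq. pose proof vertex_weight_pos. field. lra.
- intros j Hj. pose proof (Ha j Hj). field. lra.
Qed.

Section SlopeBound.
Variables (dl m Mx Kb : R).
Hypothesis Hrho1 : sum_lt N rho = 1.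
Hypothesis Hdl : 0 < dl.
Hypothesis Hm : 0 < m.
Hypothesis Hab : forall j, (j < N)%nat -> m * dl <= a j <= Mx * dl.
Hypothesis Hbe : forall j, (j < N)%nat -> Rabs (be j) <= Kb * dl ^ 2.

Lemma vertex_weight_lower_bound : / (Mx * dl) <= S.
Proof.
replace (/ (Mx * dl)) with (/ (Mx * dl) * sum_lt N rho) by (rewrite Hrho1; ring).
rewrite <- sum_lt_scal. apply sum_lt_le. intros j Hj.
specialize (Hab j Hj). specialize (Hrho j Hj). specialize (Ha j Hj). unfold Rdiv.
rewrite Rmult_comm. apply Rmult_le_compat_l; [lra|]. apply Rinv_le_contravar; lra.
Qed.

Lemma vertex_data_term_bound : Rabs U <= Kb * dl / m.
Proof.
unfold U. eapply Rle_trans; [apply sum_lt_abs|].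
replace (Kb * dl / m) with (Kb * dl / m * sum_lt N rho) by (rewrite Hrho1; ring).
rewrite <- sum_lt_scal. apply sum_lt_le. intros j Hj.
specialize (Hab j Hj). specialize (Hrho j Hj). specialize (Hbe j Hj). specialize (Ha j Hj).
unfold Rdiv. rewrite !Rabs_mult, (Rabs_right (rho j)), (Rabs_right (/ a j))
  by (left; try apply Rinv_0_lt_compat; lra).
replace (Kb * dl * / m * rho j) with (rho j * (Kb * dl ^ 2 * / (m * dl))) by (field; lra).
rewrite Rmult_assoc. apply Rmult_le_compat_l; [lra|].
apply Rmult_le_compat; [apply Rabs_pos | left; apply Rinv_0_lt_compat; lra | exact Hbe |].
apply Rinv_le_contravar; nra.
Qed.

Lemma vertex_slope_bound (c : nat -> R) (W : R) :
  (forall j, (j < N)%nat -> - c j * a j - be j = W) ->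
  sum_lt N (fun j => rho j * c j) = eta * fv ->
  forall i, (i < N)%nat -> Rabs (c i) <= ((Rabs (eta * fv) + Kb * dl / m) * Mx + Kb * dl) / m.
Proof.
intros Hc Hv i Hi. rewrite (vertex_flux_eq c W Hc) in Hv.
assert (HMx : 0 < Mx * dl) by (pose proof (Hab O ltac:(lia)); nra).
assert (HW : Rabs W <= (Rabs (eta * fv) + Kb * dl / m) * (Mx * dl)).
{ pose proof vertex_weight_pos. pose proof vertex_data_term_bound.
  assert (HWS : Rabs W * S <= Rabs (eta * fv) + Kb * dl / m).
  { replace (Rabs W * S) with (Rabs (eta * fv + U)).
    - eapply Rle_trans; [apply Rabs_triang | lra].
    - rewrite <- Hv. replace (- (W * S + U) + U) with (- (W * S)) by ring.
      now rewrite Rabs_Ropp, Rabs_mult, (Rabs_right S) by lra. }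
  apply Rmult_le_reg_r with (/ (Mx * dl)); [now apply Rinv_0_lt_compat|].
  rewrite Rmult_assoc, Rinv_r, Rmult_1_r by lra.
  eapply Rle_trans; [|exact HWS].
  apply Rmult_le_compat_l; [apply Rabs_pos | exact vertex_weight_lower_bound]. }
specialize (Hab i Hi). specialize (Hbe i Hi). specialize (Ha i Hi).
set (Y := (Rabs (eta * fv) + Kb * dl / m) * Mx + Kb * dl).
assert (HWb : Rabs (W + be i) <= dl * Y).
{ eapply Rle_trans; [apply Rabs_triang|]. unfold Y. nra. }
replace (c i) with (- (W + be i) / a i) by (rewrite <- (Hc i Hi); field; lra).
unfold Rdiv.
rewrite Rabs_mult, Rabs_Ropp, (Rabs_right (/ a i)) by (left; apply Rinv_0_lt_compat; lra).
apply Rle_trans with (dl * Y * / (m * dl)).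
- apply Rmult_le_compat; [apply Rabs_pos | left; apply Rinv_0_lt_compat; lra | exact HWb |].
  apply Rinv_le_contravar; nra.
- right. field. lra.
Qed.

End SlopeBound.
End VertexSystem.

(** * The star graph *)

Lemma lim_at_right_0_of_rel_continuous (dl : R) (g h : R -> R) : 0 < dl ->
  rel_continuous_on (Ico 0 dl) g -> (forall x, 0 < x < dl -> h x = g x) ->
  filterlim h (at_right 0) (locally (g 0)).
Proof.
intros Hdl Hc He. apply filterlim_within_iff.
assert (H0 : lim_within (Ico 0 dl) g 0 (g 0)) by (apply filterlim_within_iff, Hc; unfold Ico; lra).
intros eps Heps. destruct (H0 eps Heps) as [d [Hd H']].
exists (Rmin d dl). split; [now apply Rmin_pos|]. intros y Hy Hyd.
pose proof (Rmin_l d dl). pose proof (Rmin_r d dl). apply Rabs_def2 in Hyd as Hyd'.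
rewrite He by lra. apply H'; unfold Ico; lra.
Qed.

Lemma abs_le_at_left_end (dl C : R) (g : R -> R) : 0 < dl ->
  rel_continuous_on (Ico 0 dl) g -> (forall y, 0 < y < dl -> Rabs (g y) <= C) -> Rabs (g 0) <= C.
Proof.
intros Hdl Hc HC.
apply (lim_within_abs_le _ g 0 (limit_point_open_interval_left 0 dl Hdl)); [|exact HC].
apply (lim_within_subset (Ico 0 dl)); [unfold Ico; intros; lra|].
apply filterlim_within_iff, Hc. unfold Ico; lra.
Qed.

Section StarGraph.
Variables (N : nat) (eta : R) (rho : nat -> R) (sig bb : nat -> R -> R) (sig0 : R).
Hypothesis HN : (1 <= N)%nat.
Hypothesis Heta : 0 <= eta.
Hypothesis Hrho_pos : forall i, (i < N)%nat -> 0 < rho i.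
Hypothesis Hrho_sum : sum_lt N rho = 1.
Hypothesis Hsig0 : 0 < sig0.
Hypothesis Hsig_low : forall i x, (i < N)%nat -> 0 < x -> sig0 < sig i x.
Hypothesis Hbdd : exists B, forall i x, (i < N)%nat -> 0 < x ->
  Rabs (sig i x) <= B /\ Rabs (bb i x) <= B.
Hypothesis Hsig_cont : forall i, (i < N)%nat -> rel_continuous_on (fun x => 0 <= x) (sig i).
Hypothesis Hb_cont : forall i, (i < N)%nat -> rel_continuous_on (fun x => 0 <= x) (bb i).

(* The bounds are assumed on [(0, oo)] only; continuity carries them to the vertex. *)
Lemma edges_admissible :
  exists B, forall i, (i < N)%nat -> admissible_coefficients sig0 B (sig i) (bb i).
Proof.
destruct Hbdd as [B HB]. exists B. intros i Hi.
split; [exact Hsig0 | split; [now apply Hsig_cont | split; [now apply Hb_cont|]]].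
assert (HD := limit_point_open_interval_left 0 1 Rlt_0_1).
assert (Hlim : forall g, rel_continuous_on (fun x => 0 <= x) g ->
                 lim_within (fun y => 0 < y < 1) g 0 (g 0)).
{ intros g Hg. apply (lim_within_subset (fun x => 0 <= x)); [intros; lra|].
  apply filterlim_within_iff, Hg, Rle_refl. }
intros z Hz. destruct (Req_dec z 0) as [->|Hz0].
- split.
  + apply (lim_within_ge _ _ _ HD _ _ (Hlim _ (Hsig_cont i Hi))).
    intros y Hy. left. apply Hsig_low; [exact Hi | lra].
  + apply (lim_within_abs_le _ _ _ HD _ _ (Hlim _ (Hb_cont i Hi))).
    intros y Hy. apply HB; [exact Hi | lra].
- split; [left; apply Hsig_low | apply HB]; auto; lra.
Qed.

Lemma admissible_data dl f : admissible_f N dl f ->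
  forall i, (i < N)%nat -> exists Bf, bounded_continuous_data dl Bf (f i).
Proof. intros [H _] i Hi. destruct (H i Hi) as [[Bf HBf] Hc]. now exists Bf. Qed.

Section Solutions.
Variables (dl : R) (f : nat -> R -> R).
Hypothesis Hdl : 0 < dl.
Hypothesis Hf : admissible_f N dl f.
Variable B : R.
Hypothesis HE : forall i, (i < N)%nat -> admissible_coefficients sig0 B (sig i) (bb i).

Let a j := alpha (sig j) (bb j) dl 0.
Let be j := beta (sig j) (bb j) (f j) dl 0.

Lemma alpha_0_pos_edges j : (j < N)%nat -> 0 < a j.
Proof. intros Hj. exact (alpha_0_pos (HE j Hj) Hdl). Qed.

Lemma kappa_eq i :
  kappa N eta rho sig bb dl f i = vertex_constant N eta rho a be (f O 0) + be O - be i.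
Proof. reflexivity. Qed.

Lemma usol_solves : exists du d2u : nat -> R -> R,
  solves N eta rho sig bb dl f (usol N eta rho sig bb dl f) du d2u.
Proof.
set (c i := kappa N eta rho sig bb dl f i / a i).
exists (fun i => edge_slope (sig i) (bb i) (f i) dl (c i)),
       (fun i => edge_curvature (sig i) (bb i) (f i) (c i)).
split; [|split; [|split; [|split]]].
- intros i Hi. destruct (admissible_data dl f Hf i Hi) as [Bf HF].
  assert (Hu : forall x, 0 <= x <= dl -> usol N eta rho sig bb dl f i x
                 = - c i * alpha (sig i) (bb i) dl x - beta (sig i) (bb i) (f i) dl x)
    by (intros; unfold usol, c, a, Rdiv; ring).
  repeat split.
  + exact (rel_derivative_edge_solution (HE i Hi) Hdl HF _ _ Hu).
  + exact (rel_continuous_edge_slope (HE i Hi) Hdl HF (c i)).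
  + exact (rel_derivative_edge_slope (HE i Hi) Hdl HF (c i)).
  + exact (rel_continuous_edge_curvature (HE i Hi) Hdl HF (c i)).
- intros i x Hi Hx. exact (edge_solution_ode (HE i Hi) (c i) x Hx).
- exists (f O 0). split.
  + intros i Hi. destruct (admissible_data dl f Hf i Hi) as [Bf HF].
    rewrite (proj2 Hf O i) by lia.
    apply (lim_at_right_0_of_rel_continuous dl); [exact Hdl | exact (proj2 HF) |].
    intros x Hx. exact (edge_solution_ode (HE i Hi) (c i) x Hx).
  + rewrite (sum_lt_ext _ _
      (fun i => rho i * ((vertex_constant N eta rho a be (f O 0) + be O - be i) / a i))).
    * rewrite vertex_slopes_sum; [ring | exact HN | exact Hrho_pos | exact alpha_0_pos_edges].
    * intros i Hi. rewrite edge_slope_0 by exact Hdl. unfold c. now rewrite kappa_eq.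
- intros i Hi. unfold usol, alpha, beta. rewrite !RInt_point. unfold zero; simpl. unfold Rdiv; ring.
- intros i j Hi Hj. unfold usol. rewrite !kappa_eq. fold (a i) (a j) (be i) (be j).
  pose proof (alpha_0_pos_edges i Hi). pose proof (alpha_0_pos_edges j Hj). field. lra.
Qed.

Section GivenSolution.
Variables (u du d2u : nat -> R -> R).
Hypothesis Hsol : solves N eta rho sig bb dl f u du d2u.

Lemma solution_edge_value i x : (i < N)%nat -> 0 <= x <= dl ->
  u i x = - du i 0 * alpha (sig i) (bb i) dl x - beta (sig i) (bb i) (f i) dl x.
Proof.
intros Hi Hx. destruct Hsol as [Hreg [Hode [_ [Hudl _]]]].
destruct (admissible_data dl f Hf i Hi) as [Bf HF].
apply (regular_solution_value (HE i Hi) Hdl HF (u i) (du i) (d2u i)); auto.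
Qed.

Lemma solution_vertex_continuity j : (j < N)%nat -> - du j 0 * a j - be j = u O 0.
Proof.
intros Hj. destruct Hsol as [_ [_ [_ [_ Hcont]]]].
rewrite (Hcont O j), (solution_edge_value j 0) by (lia || lra). reflexivity.
Qed.

Lemma solution_vertex_flux : sum_lt N (fun j => rho j * du j 0) = eta * f O 0.
Proof.
destruct Hsol as [_ [Hode [[Lv [HLv Hvert]] _]]].
assert (HLv0 : Lv = f O 0).
{ destruct (admissible_data dl f Hf O ltac:(lia)) as [Bf HF].
  assert (L1 := HLv O ltac:(lia)). apply filterlim_within_iff in L1.
  assert (L2 := lim_at_right_0_of_rel_continuous dl (f O) _ Hdl (proj2 HF)
                  (fun x Hx => Hode O x ltac:(lia) Hx)).
  apply filterlim_within_iff in L2.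
  apply (lim_within_unique _ (Lgen (sig O) (bb O) (du O) (d2u O)) 0
           (limit_point_open_interval_left 0 dl Hdl));
    apply (lim_within_subset (fun y => 0 < y)); auto; intros; lra. }
subst Lv. lra.
Qed.

Lemma solution_unique i x : (i < N)%nat -> 0 <= x <= dl ->
  u i x = usol N eta rho sig bb dl f i x.
Proof.
intros Hi Hx. rewrite solution_edge_value by assumption.
rewrite (vertex_slopes_unique N eta (f O 0) rho a be HN Hrho_pos alpha_0_pos_edges
           (fun j => du j 0) (u O 0) solution_vertex_continuity solution_vertex_flux i Hi).
unfold usol. rewrite kappa_eq. unfold a, Rdiv. ring.
Qed.

Variable M : R.
Hypothesis Hdl1 : dl <= 1.
Hypothesis HfM : forall i x, (i < N)%nat -> 0 <= x < dl -> Rabs (f i x) <= M.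

Let k := drift_bound sig0 B.
Let hM := speed_integrand_bound sig0 B 1 M.
Let Kb := hM * exp k.
Let slope_0_bound := ((eta * M + Kb / exp (- k)) * exp k + Kb) / exp (- k).
Let slope_bound := (slope_0_bound + hM) * exp k.

Lemma data_bounds i : (i < N)%nat -> bounded_continuous_data dl M (f i).
Proof. intros Hi. split; [intros; now apply HfM | exact (proj2 (proj1 Hf i Hi))]. Qed.

Lemma constants_nonneg : 0 <= k /\ 0 <= M /\ 0 <= hM.
Proof.
assert (Hk : 0 <= k) by exact (drift_bound_nonneg (HE O ltac:(lia))).
assert (HM : 0 <= M) by (eapply Rle_trans; [apply Rabs_pos | apply (HfM O 0); [lia | lra]]).
repeat split; [exact Hk | exact HM|].
unfold hM, speed_integrand_bound. apply Rmult_le_pos; [exact HM|].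
apply Rmult_le_pos;
  [apply Rlt_le, Rdiv_lt_0_compat; [lra | now apply pow_lt] | apply Rlt_le, exp_pos].
Qed.

Lemma solution_slope_0_bound i : (i < N)%nat -> Rabs (du i 0) <= slope_0_bound.
Proof.
intros Hi. destruct constants_nonneg as [Hk [HM HhM]].
assert (Hkdl : k * dl <= k) by (rewrite <- (Rmult_1_r k) at 2; apply Rmult_le_compat_l; lra).
assert (Hhm : forall j, (j < N)%nat -> speed_integrand_bound sig0 B dl M <= hM)
  by (intros; apply speed_integrand_bound_mono; [exact Hsig0 | exact HM | exact Hk | exact Hdl1]).
assert (Hab : forall j, (j < N)%nat -> exp (- k) * dl <= a j <= exp k * dl).
{ intros j Hj. destruct (alpha_0_bounds (HE j Hj) Hdl) as [Hlo Hhi]. fold k in Hlo, Hhi.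
  split; [eapply Rle_trans; [|exact Hlo] | eapply Rle_trans; [exact Hhi|]];
    apply Rmult_le_compat_r; try lra; apply exp_le_exp; lra. }
assert (Hbe : forall j, (j < N)%nat -> Rabs (be j) <= Kb * dl ^ 2).
{ intros j Hj. eapply Rle_trans; [exact (beta_0_bound (HE j Hj) Hdl (data_bounds j Hj))|].
  fold k. pose proof (Hhm j Hj). pose proof (exp_le_exp _ _ Hkdl). pose proof (exp_pos (k * dl)).
  replace (Kb * dl ^ 2) with (dl * (hM * dl * exp k)) by (unfold Kb; ring).
  apply Rmult_le_compat_l; [lra|]. apply Rmult_le_compat; [| apply Rlt_le, exp_pos | |exact H0].
  - apply Rmult_le_pos; [|lra].
    apply (speed_integrand_bound_nonneg (HE j Hj) Hdl (data_bounds j Hj)).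
  - apply Rmult_le_compat_r; lra. }
eapply Rle_trans.
{ exact (vertex_slope_bound N eta (f O 0) rho a be HN Hrho_pos alpha_0_pos_edges
           dl (exp (- k)) (exp k) Kb Hrho_sum Hdl (exp_pos _) Hab Hbe
           (fun j => du j 0) (u O 0) solution_vertex_continuity solution_vertex_flux i Hi). }
assert (HKb : 0 <= Kb) by (apply Rmult_le_pos; [exact HhM | apply Rlt_le, exp_pos]).
assert (Hm : 0 < exp (- k)) by apply exp_pos. assert (HMx : 0 < exp k) by apply exp_pos.
assert (Hf0 : Rabs (eta * f O 0) <= eta * M).
{ rewrite Rabs_mult, (Rabs_right eta) by lra.
  apply Rmult_le_compat_l; [lra|]. apply HfM; [lia | lra]. }
assert (HKbdl : Kb * dl <= Kb) by (rewrite <- (Rmult_1_r Kb) at 2; apply Rmult_le_compat_l; lra).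
assert (HKbdlm : Kb * dl / exp (- k) <= Kb / exp (- k))
  by (unfold Rdiv; apply Rmult_le_compat_r; [apply Rlt_le, Rinv_0_lt_compat|]; lra).
unfold slope_0_bound, Rdiv in *. apply Rmult_le_compat_r; [apply Rlt_le, Rinv_0_lt_compat; lra|].
apply Rplus_le_compat; [|exact HKbdl]. apply Rmult_le_compat_r; [apply Rlt_le, exp_pos|].
now apply Rplus_le_compat.
Qed.

Lemma solution_slope_bound i y : (i < N)%nat -> 0 <= y < dl -> Rabs (du i y) <= slope_bound.
Proof.
intros Hi Hy. destruct Hsol as [Hreg [Hode _]]. destruct constants_nonneg as [Hk [HM HhM]].
eapply Rle_trans; [exact (regular_solution_slope_bound (HE i Hi) Hdl (data_bounds i Hi) _ _ _
                            (Hreg i Hi) (fun x Hx => Hode i x Hi Hx) y Hy)|].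
fold k. pose proof (speed_integrand_bound_mono sig0 B dl 1 M Hsig0 HM Hk Hdl1) as Hmono.
fold hM in Hmono. pose proof (speed_integrand_bound_nonneg (HE i Hi) Hdl (data_bounds i Hi)).
apply Rmult_le_compat; [| apply Rlt_le, exp_pos | |].
- pose proof (Rabs_pos (du i 0)). nra.
- apply Rplus_le_compat; [now apply solution_slope_0_bound|].
  rewrite <- (Rmult_1_r hM). apply Rmult_le_compat; lra.
- apply exp_le_exp. rewrite <- (Rmult_1_r k) at 2. apply Rmult_le_compat_l; lra.
Qed.

Lemma solution_curvature_bound i x : (i < N)%nat -> 0 <= x < dl ->
  Rabs (d2u i x) <= 2 * (M + B * slope_bound) / sig0 ^ 2.
Proof.
intros Hi Hx. destruct Hsol as [Hreg [Hode _]].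
assert (HB : 0 <= B).
{ destruct (HE O ltac:(lia)) as [_ [_ [_ Hb]]]. destruct (Hb 0 (Rle_refl 0)) as [_ Hb0].
  pose proof (Rabs_pos (bb O 0)). lra. }
assert (Hs2 : 0 < sig0 ^ 2) by now apply pow_lt.
assert (Hint : forall y, 0 < y < dl -> Rabs (d2u i y) <= 2 * (M + B * slope_bound) / sig0 ^ 2).
{ intros y Hy. eapply Rle_trans.
  { exact (ode_curvature_bound (HE i Hi) (f i) _ _ y (proj1 Hy) (Hode i y Hi Hy)). }
  unfold Rdiv. apply Rmult_le_compat_r; [apply Rlt_le, Rinv_0_lt_compat; lra|].
  apply Rmult_le_compat_l; [lra|]. apply Rplus_le_compat; [apply HfM; [exact Hi | lra]|].
  apply Rmult_le_compat_l; [exact HB|]. apply solution_slope_bound; [exact Hi | lra]. }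
destruct (Req_dec x 0) as [->|Hx0]; [|apply Hint; lra].
destruct (Hreg i Hi) as [_ [_ [_ Hc]]]. exact (abs_le_at_left_end dl _ _ Hdl Hc Hint).
Qed.

End GivenSolution.
End Solutions.

Lemma solutions_curvature_bounded (M : R) : exists C delta0 : R, 0 < delta0 /\
  forall (dl : R) (f : nat -> R -> R), 0 < dl < delta0 -> admissible_f N dl f ->
  (forall i x, (i < N)%nat -> 0 <= x < dl -> Rabs (f i x) <= M) ->
  forall u du d2u : nat -> R -> R, solves N eta rho sig bb dl f u du d2u ->
  forall i x, (i < N)%nat -> 0 <= x < dl -> Rabs (d2u i x) <= C.
Proof.
destruct edges_admissible as [B HE]. eexists. exists 1. split; [lra|].
intros dl f [Hdl Hdl1] Hf HfM u du d2u Hsol.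
exact (solution_curvature_bound dl f Hdl Hf B HE u du d2u Hsol M (Rlt_le _ _ Hdl1) HfM).
Qed.

End StarGraph.

Theorem propositionA1 (N : nat) (eta : R) (rho : nat -> R)
  (sig bb : nat -> R -> R) (sig0 : R)
  (HN : (1 <= N)%nat) (Heta : 0 <= eta)
  (Hrho_pos : forall i, (i < N)%nat -> 0 < rho i)
  (Hrho_sum : sum_lt N rho = 1)
  (Hsig0 : 0 < sig0)
  (Hsig_low : forall i x, (i < N)%nat -> 0 < x -> sig0 < sig i x)
  (Hbdd : exists B, forall i x, (i < N)%nat -> 0 < x ->
            Rabs (sig i x) <= B /\ Rabs (bb i x) <= B)
  (Hsig_cont : forall i, (i < N)%nat -> rel_continuous_on (fun x => 0 <= x) (sig i))
  (Hb_cont : forall i, (i < N)%nat -> rel_continuous_on (fun x => 0 <= x) (bb i)) :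
  (forall (delta : R) (f : nat -> R -> R),
     0 < delta -> admissible_f N delta f ->
     (exists du d2u : nat -> R -> R,
        solves N eta rho sig bb delta f (usol N eta rho sig bb delta f) du d2u) /\
     (forall u du d2u : nat -> R -> R,
        solves N eta rho sig bb delta f u du d2u ->
        forall i x, (i < N)%nat -> 0 <= x <= delta ->
          u i x = usol N eta rho sig bb delta f i x))
  /\
  (forall M : R, exists C delta0 : R, 0 < delta0 /\
     forall (delta : R) (f : nat -> R -> R),
       0 < delta < delta0 -> admissible_f N delta f ->
       (forall i x, (i < N)%nat -> 0 <= x < delta -> Rabs (f i x) <= M) ->
       forall u du d2u : nat -> R -> R,
         solves N eta rho sig bb delta f u du d2u ->
         forall i x, (i < N)%nat -> 0 <= x < delta -> Rabs (d2u i x) <= C).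
Proof.
split.
- intros delta f Hdelta Hf.
  destruct (edges_admissible N sig bb sig0 Hsig0 Hsig_low Hbdd Hsig_cont Hb_cont) as [B HE].
  split.
  + exact (usol_solves N eta rho sig bb sig0 HN Hrho_pos delta f Hdelta Hf B HE).
  + exact (solution_unique N eta rho sig bb sig0 HN Hrho_pos delta f Hdelta Hf B HE).
- exact (solutions_curvature_bounded N eta rho sig bb sig0 HN Heta Hrho_pos Hrho_sum Hsig0
           Hsig_low Hbdd Hsig_cont Hb_cont).
Qed.
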